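(* Let $G=(V,E,p)$ be an influence graph that is an in-arborescence. Then for every partial realization $\psi$ under full-adoption feedback, $|\partial(\psi)|\le|{\rm dom}(\psi)|$.
   Context: An in-arborescence is an influence graph whose underlying graph is a directed tree with a root $r$ such that for every node $v$ the unique path between $v$ and $r$ is directed from $v$ to $r$. IC model: each edge has a probability $p_{uv}$; a realization $\phi$ contains each edge independently with probability $p_{uv}$. Full-adoption feedback: selecting $u$ as a seed reveals the live/blocked status of all out-going edges of every node reachable from $u$ in $\phi$. A partial realization $\psi$ records the seeds selected so far (the set ${\rm dom}(\psi)$) with their feedback; $\Gamma(\psi)$ is the set of nodes reachable from ${\rm dom}(\psi)$ through live edges (determined by $\psi$). The boundary $\partial(\psi)$ is a subset of $\Gamma(\psi)$ of minimum cardinality such that $G$ has no directed edge from $\Gamma(\psi)\setminus\partial(\psi)$ to $V\setminus\Gamma(\psi)$ (ties broken arbitrarily). *)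

From mathcomp Require Import all_boot all_order all_algebra.
Set Implicit Arguments. Unset Strict Implicit. Unset Printing Implicit Defensive.
Import Order.TTheory GRing.Theory Num.Theory.
Local Open Scope ring_scope.

Section InfluenceDefs.
Variable T : finType.

Definition und (E : rel T) : rel T := fun u v => E u v || E v u.

Definition underlying_tree (E : rel T) : Prop :=
  [/\ irreflexive E,
      (forall u v, E u v -> ~~ E v u),
      (forall u v, connect (und E) u v)
    & (forall c : seq T, (2 < size c)%N -> uniq c -> ~~ cycle (und E) c)].

(* In-arborescence: the underlying graph is a tree, and there is a root r such
   that for every node v the (unique) path between v and r is directed from v
   to r. *)
Definition in_arborescence (E : rel T) : Prop :=
  underlying_tree E /\ exists r : T, forall v, connect E v r.

Definition influence_graph (R : numDomainType) (E : rel T) (p : T -> T -> R)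
  : Prop := forall u v, E u v -> 0 <= p u v <= 1.

(* A realization phi (set of live edges) of the IC model: a subset of the
   edges, each edge being live/blocked in a way that has positive probability. *)
Definition realization (R : numDomainType) (E : rel T) (p : T -> T -> R)
  (phi : rel T) : Prop :=
  [/\ (forall u v, phi u v -> E u v),
      (forall u v, phi u v -> 0 < p u v)
    & (forall u v, E u v -> ~~ phi u v -> p u v < 1)].

(* Partial realization psi under full-adoption feedback: determined by its
   domain S (the seeds selected so far) and the realization phi, of which psi
   records the status of all out-going edges of nodes reachable from S. *)
Definition Gamma (S : {set T}) (phi : rel T) : {set T} :=
  [set v | [exists s in S, connect phi s v]].

Definition boundary_cand (E : rel T) (S : {set T}) (phi : rel T)
  (B : {set T}) : Prop :=
  B \subset Gamma S phi /\
  (forall u v, u \in Gamma S phi :\: B -> E u v -> v \in Gamma S phi).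

(* B is a boundary of psi: an admissible candidate of minimum cardinality
   (ties broken arbitrarily, so any such B). *)
Definition is_boundary (E : rel T) (S : {set T}) (phi : rel T)
  (B : {set T}) : Prop :=
  boundary_cand E S phi B /\
  (forall B', boundary_cand E S phi B' -> (#|B| <= #|B'|)%N).

End InfluenceDefs.

From mathcomp Require Import all_boot all_order all_algebra.

Set Implicit Arguments.
Unset Strict Implicit.
Unset Printing Implicit Defensive.

(* In an in-arborescence every node has out-degree at most one: edges u -> v1
   and u -> v2 with v1 <> v2, followed by directed paths from v1 and v2 to
   their first common descendant, would close an undirected cycle through u.
   Hence the live edges leaving any node are unique too, and the nodes reached
   from a seed form a single chain containing at most one node without a live
   out-edge. The nodes of Gamma(psi) having an edge that leaves Gamma(psi) form
   an admissible boundary, and none of them has a live out-edge (its only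
   out-edge is blocked), so mapping each of them to a seed reaching it is
   injective and a minimum boundary has at most |dom(psi)| nodes. *)

Section FinGraphs.
Variable T : finType.

Lemma last_rev_belast (x : T) (s : seq T) :
  last (last x s) (rev (belast x s)) = x.
Proof.
case/lastP: s => [|s y] //=.
by rewrite belast_rcons last_rcons rev_cons last_rcons.
Qed.

Lemma path_first_hit_prefix (e : rel T) (P : pred T) x a :
  path e x a -> P (last x a) ->
  exists a', [/\ path e x a', P (last x a')
               & {in x :: a', forall y, P y -> y = last x a'}].
Proof.
elim: a x => [|z a IH] x /=.
  by move=> _ Px; exists [::]; split=> // y /[!inE] /eqP ->.
case/andP=> exz pa Pa; have [Px | nPx] := boolP (P x).
  by exists [::]; split=> // y /[!inE] /eqP ->.
have [a' [pa' Pa' first]] := IH z pa Pa.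
exists (z :: a'); split=> //=; first by rewrite exz.
move=> y /[!inE] /orP [/eqP -> Px | /first //]; by rewrite Px in nPx.
Qed.

Lemma path_first_hit (e : rel T) (P : pred T) x a :
  path e x a -> P (last x a) ->
  exists a', [/\ path e x a', uniq (x :: a'), P (last x a')
               & {in x :: a', forall y, P y -> y = last x a'}].
Proof.
move=> pa Pa; have [a' [pa' Pa' first]] := path_first_hit_prefix pa Pa.
move: Pa' first; case: (shortenP pa') => a'' pa'' ua'' sub_a' Pa' first.
exists a''; split=> // y /[!inE] /orP [/eqP -> | /sub_a' ya'] Py.
  by apply: first; rewrite ?mem_head.
by apply: first; rewrite // inE ya' orbT.
Qed.

Section SymmetricAcyclic.
Variable g : rel T.
Hypothesis g_sym : symmetric g.
Hypothesis g_acyclic : forall c : seq T, 2 < size c -> uniq c -> ~~ cycle g c.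

Lemma acyclic_meet u v1 v2 a b :
  g u v1 -> g u v2 -> path g v1 a -> path g v2 b -> last v1 a = last v2 b ->
  uniq (u :: v1 :: a) -> uniq (u :: v2 :: b) ->
  {in v1 :: a, forall y, y \in v2 :: b -> y = last v1 a} -> v1 = v2.
Proof.
move=> uv1 uv2 pa pb ab ua ub meet.
have [// | ne] := eqVneq v1 v2; exfalso.
have size_ab : 0 < size a + size b.
  case: a pa ab {ua meet} => [|? ?] // _; case: b pb ub => [|? ?] //= _ _ v12.
  by rewrite v12 eqxx in ne.
(* The cycle is u, v1, ..., x, ..., v2: [a] forward, then [b] backward. *)
set x := last v1 a in ab meet; set R := rev (belast v2 b).
have pR : path g x R.
  by rewrite ab rev_path (eq_path (fun y z => g_sym z y)).
have lR : last x R = v2 by rewrite ab last_rev_belast.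
move: ua ub; rewrite [uniq (u :: v1 :: a)]cons_uniq.
rewrite [uniq (u :: v2 :: b)]cons_uniq => /andP [uNa ua] /andP [uNb].
rewrite lastI -ab rcons_uniq => /andP [xNR ubR].
have uNR : u \notin R by rewrite mem_rev; apply: contra uNb => /mem_belast.
have RNa : ~~ has (mem (v1 :: a)) R.
  apply/hasPn => y; rewrite mem_rev => yR; apply/negP => ya.
  by move: xNR; rewrite -(meet y ya (mem_belast yR)) yR.
have size_c : 2 < size (u :: (v1 :: a) ++ R).
  by rewrite /= size_cat size_rev size_belast /= !ltnS.
have uniq_c : uniq (u :: (v1 :: a) ++ R).
  by rewrite cons_uniq mem_cat negb_or uNa uNR cat_uniq ua rev_uniq ubR RNa.
apply: (negP (g_acyclic size_c uniq_c)).
by rewrite /= rcons_cat cat_path /= uv1 pa rcons_path pR lR /= g_sym uv2.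
Qed.

End SymmetricAcyclic.

Definition functional (r : rel T) := forall u v w, r u v -> r u w -> v = w.

Lemma functional_connect_sink (r : rel T) s w1 w2 : functional r ->
  connect r s w1 -> connect r s w2 ->
  (forall y, ~~ r w1 y) -> (forall y, ~~ r w2 y) -> w1 = w2.
Proof.
move=> rF /connectP [p ps ->] /connectP [q qs ->] {w1 w2}.
elim: p q s ps qs => [|y p IHp] [|z q] s //=.
- by move=> _ /andP [sz _] /(_ z); rewrite sz.
- by move=> /andP [sy _] _ _ /(_ y); rewrite sy.
move=> /andP [sy py] /andP [sz qz]; rewrite -(rF _ _ _ sy sz) in qz *.
exact: IHp.
Qed.

Section Arborescence.
Variable E : rel T.

Lemma sub_und : subrel E (und E).
Proof. by move=> x y exy; rewrite /und exy. Qed.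

Lemma und_sym : symmetric (und E).
Proof. by move=> x y; rewrite /und orbC. Qed.

Lemma tree_edge_no_return u v : underlying_tree E -> E u v -> ~~ connect E v u.
Proof.
case=> irrE asymE _ acyc euv; apply/negP => /connectP [q pq uq].
move: euv; rewrite uq; case: (shortenP pq) => {pq uq q} q pq uq _ e_back.
have c_und : cycle (und E) (v :: q).
  by rewrite /= rcons_path (sub_path sub_und pq) /und e_back.
case: q pq uq e_back c_und => [|y [|z q]] pq uq e_back c_und.
- by rewrite /= irrE in e_back.
- by move: pq => /andP [evy _]; rewrite /= (negPf (asymE _ _ evy)) in e_back.
- by rewrite (negPf (acyc [:: v, y, z & q] isT uq)) in c_und.
Qed.

Lemma in_arborescence_functional : in_arborescence E -> functional E.
Proof.
case=> tree [r to_r] u v1 v2 uv1 uv2; have [_ _ _ acyc] := tree.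
have [a [pa ua v2a first]] : exists a, [/\ path E v1 a, uniq (v1 :: a),
    connect E v2 (last v1 a)
  & {in v1 :: a, forall y, connect E v2 y -> y = last v1 a}].
  have /connectP [a0 pa0 ra0] := to_r v1.
  by apply: path_first_hit pa0 _; rewrite -ra0.
case/connectP: v2a => b0 pb0; case: (shortenP pb0) => {b0 pb0} b pb ub _ ab.
apply: (acyclic_meet und_sym acyc (sub_und uv1) (sub_und uv2)
          (sub_path sub_und pa) (sub_path sub_und pb) ab).
- rewrite cons_uniq ua andbT; apply/negP => /(path_connect pa) v1u.
  by case/negP: (tree_edge_no_return tree uv1).
- rewrite cons_uniq ub andbT; apply/negP => /(path_connect pb) v2u.
  by case/negP: (tree_edge_no_return tree uv2).
- by move=> y ya /(path_connect pb) v2y; apply: first.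
Qed.

End Arborescence.

Section ExitSet.
Variables (E : rel T) (S : {set T}) (phi : rel T).

Definition exit_set : {set T} :=
  [set w in Gamma S phi | [exists v, E w v && (v \notin Gamma S phi)]].

Lemma GammaP v :
  reflect (exists2 s, s \in S & connect phi s v) (v \in Gamma S phi).
Proof.
rewrite inE; apply: (iffP existsP) => [[s /andP [sS sv]] | [s sS sv]].
  by exists s.
by exists s; rewrite sS.
Qed.

Lemma Gamma_closed w y : w \in Gamma S phi -> phi w y -> y \in Gamma S phi.
Proof.
case/GammaP=> s sS sw wy; apply/GammaP; exists s => //.
exact: connect_trans sw (connect1 wy).
Qed.

Lemma exit_set_boundary_cand : boundary_cand E S phi exit_set.
Proof.
split; first by apply/subsetP => w; rewrite inE => /andP [].
move=> u v; rewrite in_setD inE => /andP [uNexit uG] uv.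
apply: contraNT uNexit => vNG.
by rewrite uG; apply/existsP; exists v; rewrite uv.
Qed.

Hypotheses (E_fun : functional E) (phi_sub : subrel phi E).

Lemma exit_set_sink w y : w \in exit_set -> ~~ phi w y.
Proof.
rewrite inE => /andP [wG /existsP [v /andP [wv vNG]]]; apply/negP => wy.
by rewrite (E_fun wv (phi_sub wy)) (Gamma_closed wG wy) in vNG.
Qed.

Lemma card_exit_set : #|exit_set| <= #|S|.
Proof.
pose seed w := odflt w [pick s in S | connect phi s w].
have seedP w : w \in exit_set -> seed w \in S /\ connect phi (seed w) w.
  rewrite inE => /andP [/GammaP [s sS sw] _]; rewrite /seed.
  by case: pickP => [s' /andP [] // | /(_ s)]; rewrite sS sw.
have phi_fun : functional phi.
  by move=> u v w uv uw; apply: E_fun (phi_sub uv) (phi_sub uw).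
have seed_inj : {in exit_set &, injective seed}.
  move=> w1 w2 w1X w2X e.
  have [_ c1] := seedP _ w1X; have [_ c2] := seedP _ w2X.
  rewrite e in c1; apply: functional_connect_sink phi_fun c1 c2 _ _ => y;
    exact: exit_set_sink.
rewrite -(card_in_imset seed_inj); apply/subset_leq_card/subsetP => s.
by case/imsetP=> w wX ->; case: (seedP w wX).
Qed.

End ExitSet.
End FinGraphs.

Theorem lemma3 (R : realFieldType) (T : finType) (E : rel T)
  (p : T -> T -> R) :
  influence_graph E p -> in_arborescence E ->
  forall (S : {set T}) (phi : rel T), realization E p phi ->
  forall B : {set T}, is_boundary E S phi B -> (#|B| <= #|S|)%N.
Proof.
move=> _ arb S phi [phi_sub _ _] B [_ B_min].
apply: leq_trans (B_min _ (exit_set_boundary_cand E S phi)) _.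
exact: card_exit_set (in_arborescence_functional arb) phi_sub.
Qed.
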